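(* Let $\langle A, \leq, \otimes, \mathbf{1}\rangle$ be a finitely distributive semi-lattice monoid (respectively, a distributive complete lattice monoid), with bottom element $\bot$. Let $Lex_\omega(A) = I(A)^\omega \cup I(A)^\ast A \{\bot\}^\omega$, with componentwise operation $\otimes^\omega$, identity $\mathbf{1}^\omega$, and order $a \leq_\omega b$ iff $a_{\leq k} \leq_k b_{\leq k}$ for all $k\geq1$. Then $\langle Lex_\omega(A), \leq_\omega, \otimes^\omega, \mathbf{1}^\omega\rangle$ is a finitely distributive semi-lattice monoid (respectively, a distributive complete lattice monoid).
   Context: A semi-lattice monoid (SLM) is $\langle A,\leq,\otimes,\mathbf{1}\rangle$ where $\langle A,\otimes,\mathbf{1}\rangle$ is a commutative monoid and $\langle A,\leq\rangle$ a partial order in which every finite subset (including $\emptyset$, whose LUB is the bottom $\bot$) has a least upper bound $\bigvee X$; a complete lattice monoid (CLM) is the same with LUBs for all subsets. Finitely distributive: $a\otimes\bigvee X=\bigvee\{a\otimes x\mid x\in X\}$ for all $a$ and finite $X$; distributive (CLM): for all $X$. $a<b$ means $a\leq b$, $a\neq b$. $I(A) = \{c \in A \mid \forall a,b \in A.\ a \otimes c = b \otimes c \Rightarrow a = b\}$, $C(A)=A\setminus I(A)$. $I(A)^\omega$: infinite sequences over $I(A)$; $I(A)^\ast A\{\bot\}^\omega$: infinite sequences consisting of a finite (possibly empty) sequence over $I(A)$, then one element of $A$, then infinitely many $\bot$. $a_{\leq k}$ is the length-$k$ prefix. The order $\leq_k$ on $A^k$: $\leq_1=\leq$, and for $k\geq2$,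 $a_1 \ldots a_k \leq_k b_1 \ldots b_k$ iff $a_1 < b_1$, or $a_1 = b_1$ and $a_2 \ldots a_k \leq_{k-1} b_2 \ldots b_k$. *)

From Stdlib Require Import List.
Import ListNotations.
Set Implicit Arguments.

Definition is_ub {T : Type} (le : T -> T -> Prop) (X : T -> Prop) (x : T) : Prop :=
  forall y, X y -> le y x.
Definition is_lub {T : Type} (le : T -> T -> Prop) (X : T -> Prop) (x : T) : Prop :=
  is_ub le X x /\ forall z, is_ub le X z -> le x z.

Definition partial_order {T : Type} (le : T -> T -> Prop) : Prop :=
  (forall a, le a a) /\
  (forall a b, le a b -> le b a -> a = b) /\
  (forall a b c, le a b -> le b c -> le a c).

Definition comm_monoid {T : Type} (mul : T -> T -> T) (one : T) : Prop :=
  (forall a b c, mul a (mul b c) = mul (mul a b) c) /\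
  (forall a b, mul a b = mul b a) /\
  (forall a, mul one a = a).

(** finite subsets are represented by lists (the empty list gives the bottom) *)
Definition SLM {T : Type} (le : T -> T -> Prop) (mul : T -> T -> T) (one : T) : Prop :=
  partial_order le /\ comm_monoid mul one /\
  forall l : list T, exists x, is_lub le (fun y => In y l) x.

Definition CLM {T : Type} (le : T -> T -> Prop) (mul : T -> T -> T) (one : T) : Prop :=
  partial_order le /\ comm_monoid mul one /\
  forall X : T -> Prop, exists x, is_lub le X x.

Definition fin_distributive {T : Type} (le : T -> T -> Prop) (mul : T -> T -> T) : Prop :=
  forall (a : T) (l : list T) (s : T), is_lub le (fun y => In y l) s ->
    is_lub le (fun y => exists x, In x l /\ y = mul a x) (mul a s).

Definition distributive {T : Type} (le : T -> T -> Prop) (mul : T -> T -> T) : Prop :=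
  forall (a : T) (X : T -> Prop) (s : T), is_lub le X s ->
    is_lub le (fun y => exists x, X x /\ y = mul a x) (mul a s).

(** I(A): cancellable elements *)
Definition cancellable {A : Type} (mul : A -> A -> A) (c : A) : Prop :=
  forall a b, mul a c = mul b c -> a = b.

Definition strict {A : Type} (le : A -> A -> Prop) (a b : A) : Prop := le a b /\ a <> b.

Definition in_Lex {A : Type} (mul : A -> A -> A) (bot : A) (s : nat -> A) : Prop :=
  (forall n, cancellable mul (s n)) \/
  (exists k, (forall n, n < k -> cancellable mul (s n)) /\
             (forall n, k < n -> s n = bot)).

Definition LexT {A : Type} (mul : A -> A -> A) (bot : A) : Type :=
  { s : nat -> A | in_Lex mul bot s }.

Definition shift {A : Type} (s : nat -> A) : nat -> A := fun n => s (S n).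

(** lexk le k a b  <->  a_{<= k+1}  <=_{k+1}  b_{<= k+1} *)
Fixpoint lexk {A : Type} (le : A -> A -> Prop) (k : nat) (a b : nat -> A) : Prop :=
  match k with
  | O => le (a 0) (b 0)
  | S k' => strict le (a 0) (b 0) \/ (a 0 = b 0 /\ lexk le k' (shift a) (shift b))
  end.

Definition lex_omega_le {A : Type} (le : A -> A -> Prop) (a b : nat -> A) : Prop :=
  forall k, lexk le k a b.

Definition lex_le {A : Type} (le : A -> A -> Prop) (mul : A -> A -> A) (bot : A)
  (x y : LexT mul bot) : Prop := lex_omega_le le (proj1_sig x) (proj1_sig y).

Definition lex_mul_closed {A : Type} (mul : A -> A -> A) (bot : A) : Prop :=
  forall a b, in_Lex mul bot a -> in_Lex mul bot b -> in_Lex mul bot (fun n => mul (a n) (b n)).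

Definition lex_mul {A : Type} (mul : A -> A -> A) (bot : A)
  (Hc : lex_mul_closed mul bot) (x y : LexT mul bot) : LexT mul bot :=
  exist _ (fun n => mul (proj1_sig x n) (proj1_sig y n))
        (Hc _ _ (proj2_sig x) (proj2_sig y)).

Lemma one_omega_in_Lex {A : Type} (mul : A -> A -> A) (one bot : A) :
  comm_monoid mul one -> in_Lex mul bot (fun _ => one).
Proof.
  intros [_ [Hc Hu]]. left. intros n a b H.
  rewrite (Hc a one), (Hc b one), !Hu in H. exact H.
Qed.

Definition lex_one {A : Type} (mul : A -> A -> A) (one bot : A)
  (Hm : comm_monoid mul one) : LexT mul bot :=
  exist _ (fun _ => one) (one_omega_in_Lex bot Hm).

From Stdlib Require Import List Arith Lia Wf_nat Classical ClassicalEpsilon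
  FunctionalExtensionality ProofIrrelevance.
Import ListNotations.

(* Two sequences satisfy [a <=_omega b] iff [a j <= b j] at every index [j]
   below which they agree; with this reading the order axioms hold entrywise.
   The supremum of a family [X] is built greedily: its [n]-th entry is the
   supremum of the [n]-th entries of the members of [X] that agree with it
   below [n].  If that entry is not cancellable, then every member contributing
   at a later index has the same non-cancellable entry at [n], hence is [bot]
   afterwards, so the supremum stays in Lex_omega(A).  Distributivity is
   inherited entry by entry from that of [A]. *)

Definition agree_below {A : Type} (j : nat) (a b : nat -> A) : Prop :=
  forall i, i < j -> a i = b i.

Lemma is_lub_ext {T : Type} (R : T -> T -> Prop) (X Y : T -> Prop) (v : T) :
  (forall y, X y <-> Y y) -> is_lub R X v -> is_lub R Y v.
Proof.
  intros HXY [Hub Hleast]; split.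
  - intros y Hy; apply Hub, HXY, Hy.
  - intros z Hz; apply Hleast; intros y Hy; apply Hz, HXY, Hy.
Qed.

Lemma is_lub_unique {T : Type} (R : T -> T -> Prop) (X : T -> Prop) (u v : T) :
  partial_order R -> is_lub R X u -> is_lub R X v -> u = v.
Proof.
  intros [_ [Hanti _]] [Hu_ub Hu_least] [Hv_ub Hv_least].
  apply Hanti; [apply Hu_least, Hv_ub | apply Hv_least, Hu_ub].
Qed.

Section LexOrder.
Context {A : Type} {le : A -> A -> Prop}.

Lemma lex_omega_leP (a b : nat -> A) :
  lex_omega_le le a b <-> forall j, agree_below j a b -> le (a j) (b j).
Proof.
  split.
  - intros Hab j; specialize (Hab j); revert a b Hab.
    induction j as [|j IH]; intros a b Hab Hagree; simpl in Hab.
    + exact Hab.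
    + destruct Hab as [[_ Hne] | [_ Hab]].
      * exfalso; apply Hne, Hagree; lia.
      * apply (IH (shift a) (shift b) Hab); intros i Hi; apply Hagree; lia.
  - intros Hab k; revert a b Hab.
    induction k as [|k IH]; intros a b Hab; simpl.
    + apply Hab; intros i Hi; lia.
    + destruct (classic (a 0 = b 0)) as [E|Hne].
      * right; split; [exact E|].
        apply IH; intros j Hj; apply (Hab (S j)).
        intros [|i] Hi; [exact E | apply Hj; lia].
      * left; split; [apply Hab; intros i Hi; lia | exact Hne].
Qed.

Context (Hpo : partial_order le).

Lemma lex_omega_le_refl (a : nat -> A) : lex_omega_le le a a.
Proof. apply lex_omega_leP; intros j _; apply Hpo. Qed.

Lemma lex_omega_le_antisym (a b : nat -> A) :
  lex_omega_le le a b -> lex_omega_le le b a -> a = b.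
Proof.
  rewrite !lex_omega_leP; intros Hab Hba.
  assert (Hagree : forall n, agree_below n a b).
  { induction n as [|n IH]; intros i Hi; [lia|].
    assert (i < n \/ i = n) as [Hlt | ->] by lia; [now apply IH|].
    apply Hpo; [apply Hab, IH | apply Hba; intros j Hj; symmetry; apply IH, Hj]. }
  extensionality n; apply (Hagree (S n)); lia.
Qed.

Lemma agree_below_lex_between (a b c : nat -> A) j :
  lex_omega_le le a b -> lex_omega_le le b c -> agree_below j a c -> agree_below j a b.
Proof.
  rewrite !lex_omega_leP; intros Hab Hbc.
  induction j as [|j IH]; intros Hac i Hi; [lia|].
  assert (Hac' : agree_below j a c) by (intros k Hk; apply Hac; lia).
  specialize (IH Hac').
  assert (i < j \/ i = j) as [Hlt | ->] by lia; [now apply IH|].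
  apply Hpo; [now apply Hab|].
  rewrite (Hac j) by lia.
  apply Hbc; intros k Hk; rewrite <- (IH k Hk); apply Hac'; exact Hk.
Qed.

Lemma lex_omega_le_trans (a b c : nat -> A) :
  lex_omega_le le a b -> lex_omega_le le b c -> lex_omega_le le a c.
Proof.
  intros Hab Hbc; apply lex_omega_leP; intros j Hac.
  pose proof (agree_below_lex_between _ _ _ j Hab Hbc Hac) as Hagree.
  destruct Hpo as [_ [_ Htrans]]; apply Htrans with (b j).
  - apply (proj1 (lex_omega_leP a b) Hab j Hagree).
  - apply (proj1 (lex_omega_leP b c) Hbc j).
    intros i Hi; rewrite <- (Hagree i Hi); apply Hac, Hi.
Qed.

End LexOrder.

Section LexCarrier.
Context {A : Type} {mul : A -> A -> A} {one bot : A}.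

Lemma LexT_eq (x y : LexT mul bot) : proj1_sig x = proj1_sig y -> x = y.
Proof. destruct x, y; simpl; apply subset_eq_compat. Qed.

Lemma lex_le_partial_order (le : A -> A -> Prop) :
  partial_order le -> partial_order (lex_le le (mul := mul) (bot := bot)).
Proof.
  intros Hpo; unfold lex_le; split; [|split].
  - intros x; apply lex_omega_le_refl, Hpo.
  - intros x y Hxy Hyx; apply LexT_eq, (lex_omega_le_antisym Hpo); assumption.
  - intros x y z; apply (lex_omega_le_trans Hpo).
Qed.

Lemma in_LexP (s : nat -> A) :
  in_Lex mul bot s <-> forall i j, ~ cancellable mul (s i) -> i < j -> s j = bot.
Proof.
  split.
  - intros [Hall | [k [Hcanc Hbot]]] i j Hi Hij; [now exfalso; apply Hi|].
    apply Hbot; destruct (Nat.lt_ge_cases i k); [now exfalso; apply Hi, Hcanc | lia].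
  - intros Hbot.
    destruct (classic (exists i, ~ cancellable mul (s i))) as [Hex | Hall].
    + destruct (dec_inh_nat_subset_has_unique_least_element _
                  (fun i => classic _) Hex) as [k [[Hk Hmin] _]].
      right; exists k; split.
      * intros n Hn; apply NNPP; intros Hnc; specialize (Hmin n Hnc); lia.
      * intros n Hn; exact (Hbot k n Hk Hn).
    + left; intros n; apply NNPP; intros Hn; apply Hall; exists n; exact Hn.
Qed.

Context (Hcm : comm_monoid mul one).

Lemma cancellable_mul (c d : A) :
  cancellable mul c -> cancellable mul d -> cancellable mul (mul c d).
Proof.
  destruct Hcm as [Hassoc _]; intros Hc Hd x y E.
  apply Hc, Hd; rewrite <- !Hassoc; exact E.
Qed.

Lemma lex_mul_closed_absorbing :
  (forall z, mul z bot = bot) -> lex_mul_closed mul bot.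
Proof.
  intros Habs a b Ha Hb; apply in_LexP; intros i j Hi Hij.
  destruct (classic (cancellable mul (a i))) as [Hai | Hai].
  - assert (Hbi : ~ cancellable mul (b i))
      by (intros Hbi; apply Hi, cancellable_mul; assumption).
    rewrite (proj1 (in_LexP b) Hb i j Hbi Hij); apply Habs.
  - destruct Hcm as [_ [Hcomm _]].
    rewrite (proj1 (in_LexP a) Ha i j Hai Hij), Hcomm; apply Habs.
Qed.

Lemma lex_comm_monoid (Hc : lex_mul_closed mul bot) :
  comm_monoid (lex_mul Hc) (lex_one bot Hcm).
Proof.
  destruct Hcm as [Hassoc [Hcomm Hone]].
  split; [|split]; intros; apply LexT_eq, functional_extensionality; intros n; simpl; auto.
Qed.

End LexCarrier.

Definition column {A : Type} (X : (nat -> A) -> Prop) (p : nat -> A) (n : nat) (y : A) : Prop :=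
  exists x, X x /\ agree_below n x p /\ y = x n.

Definition column_sup {A : Type} (le : A -> A -> Prop) (X : (nat -> A) -> Prop) (s : nat -> A) :=
  forall n, is_lub le (column X s n) (s n).

Definition seq_mul {A : Type} (mul : A -> A -> A) (a x : nat -> A) : nat -> A :=
  fun n => mul (a n) (x n).

Section ColumnSup.
Context {A : Type} (le : A -> A -> Prop) (bot : A).

Lemma column_sup_is_lub (X : (nat -> A) -> Prop) (s : nat -> A) :
  column_sup le X s -> is_lub (lex_omega_le le) X s.
Proof.
  intros Hs; split.
  - intros x Hx; apply lex_omega_leP; intros j Hj; apply (Hs j); exists x; auto.
  - intros b Hb; apply lex_omega_leP; intros j Hj; apply (Hs j).
    intros y [x [Hx [Hxs ->]]].
    apply (proj1 (lex_omega_leP x b) (Hb x Hx) j).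
    intros i Hi; rewrite Hxs by exact Hi; apply Hj, Hi.
Qed.

Lemma column_sup_in_Lex (mul : A -> A -> A) (X : (nat -> A) -> Prop) (s : nat -> A) :
  partial_order le -> (forall a, le bot a) -> (forall x, X x -> in_Lex mul bot x) ->
  column_sup le X s -> in_Lex mul bot s.
Proof.
  intros Hpo Hbot_le HX Hs; apply in_LexP; intros i j Hi Hij.
  apply Hpo; [|apply Hbot_le].
  apply (Hs j); intros y [x [Hx [Hxs ->]]].
  assert (x j = bot) as ->.
  { apply (proj1 (in_LexP x) (HX x Hx) i j); [rewrite Hxs; [exact Hi | lia] | exact Hij]. }
  apply Hpo.
Qed.

Definition sup (Y : A -> Prop) : A := epsilon (inhabits bot) (is_lub le Y).

(* [greedy_prefix X n] holds the first [n] entries of the greedy supremum;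
   its later entries are placeholders. *)
Fixpoint greedy_prefix (X : (nat -> A) -> Prop) (n : nat) : nat -> A :=
  match n with
  | O => fun _ => bot
  | S m => fun i => if i =? m then sup (column X (greedy_prefix X m) m)
                    else greedy_prefix X m i
  end.

Definition greedy_sup (X : (nat -> A) -> Prop) (n : nat) : A := greedy_prefix X (S n) n.

Lemma greedy_prefix_agree (X : (nat -> A) -> Prop) (m : nat) :
  agree_below m (greedy_prefix X m) (greedy_sup X).
Proof.
  induction m as [|m IH]; intros i Hi; [lia|].
  unfold greedy_sup; simpl.
  destruct (Nat.eqb_spec i m) as [-> | Hne]; [rewrite Nat.eqb_refl; reflexivity|].
  apply IH; lia.
Qed.

Lemma column_agree (X : (nat -> A) -> Prop) (p q : nat -> A) (n : nat) :
  agree_below n p q -> forall y, column X p n y <-> column X q n y.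
Proof.
  intros Hpq y; split; intros [x [Hx [Hxp ->]]]; exists x; repeat split; auto;
    intros i Hi; rewrite (Hxp i Hi); [|symmetry]; apply Hpq, Hi.
Qed.

Lemma greedy_column_sup (X : (nat -> A) -> Prop) :
  (forall p n, exists v, is_lub le (column X p n) v) -> column_sup le X (greedy_sup X).
Proof.
  intros Hcol n.
  assert (E : greedy_sup X n = sup (column X (greedy_prefix X n) n))
    by (unfold greedy_sup; simpl; rewrite Nat.eqb_refl; reflexivity).
  rewrite E; apply is_lub_ext with (column X (greedy_prefix X n) n).
  - apply column_agree, greedy_prefix_agree.
  - unfold sup; apply epsilon_spec, Hcol.
Qed.

End ColumnSup.

Section ColumnSupMul.
Context {A : Type} {le : A -> A -> Prop} {mul : A -> A -> A} {one bot : A}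
  (Hpo : partial_order le) (Hcm : comm_monoid mul one)
  (Habs : forall z, mul z bot = bot)
  (Hmono : forall c x y, le x y -> le (mul c x) (mul c y)).

(* Where [a ⊗ x] and [a ⊗ y] agree but [x] and [y] do not, [a] has a
   non-cancellable entry, after which [a] is [bot]. *)
Lemma lex_omega_le_mul (a x y : nat -> A) :
  in_Lex mul bot a -> lex_omega_le le x y ->
  lex_omega_le le (seq_mul mul a x) (seq_mul mul a y).
Proof.
  intros Ha Hxy; apply lex_omega_leP; intros j Hj; unfold seq_mul.
  destruct (classic (agree_below j x y)) as [Hagree | Hdiff].
  - apply Hmono, (proj1 (lex_omega_leP x y) Hxy j Hagree).
  - destruct Hcm as [_ [Hcomm _]].
    apply not_all_ex_not in Hdiff as [i Hi]; apply imply_to_and in Hi as [Hij Hne].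
    assert (Hai : ~ cancellable mul (a i)).
    { intros Hc; apply Hne, Hc; rewrite !(Hcomm _ (a i)); exact (Hj i Hij). }
    rewrite (proj1 (in_LexP a) Ha i j Hai Hij), !(Hcomm bot), !Habs; apply Hpo.
Qed.

Lemma column_sup_mul (X : (nat -> A) -> Prop) (s a : nat -> A) :
  in_Lex mul bot a -> column_sup le X s ->
  (forall n, is_lub le (fun z => exists y, column X s n y /\ z = mul (a n) y)
                       (mul (a n) (s n))) ->
  is_lub (lex_omega_le le) (fun z => exists x, X x /\ z = seq_mul mul a x) (seq_mul mul a s).
Proof.
  intros Ha Hs Hdistr; split.
  - intros z [x [Hx ->]]; apply lex_omega_le_mul; [exact Ha|].
    apply (column_sup_is_lub le X s Hs), Hx.
  - intros b Hb; apply lex_omega_leP; intros j Hj; apply (Hdistr j).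
    intros z [y [[x [Hx [Hxs ->]]] ->]].
    apply (proj1 (lex_omega_leP (seq_mul mul a x) b) (Hb _ (ex_intro _ x (conj Hx eq_refl))) j).
    intros i Hi; unfold seq_mul; rewrite Hxs by exact Hi; apply Hj, Hi.
Qed.

End ColumnSupMul.

Definition seqs_of {A : Type} {mul : A -> A -> A} {bot : A} (X : LexT mul bot -> Prop)
  (r : nat -> A) : Prop :=
  exists t, X t /\ proj1_sig t = r.

Section LexLub.
Context {A : Type} {le : A -> A -> Prop} {mul : A -> A -> A} {one bot : A}
  (Hpo : partial_order le) (Hbot_le : forall a, le bot a).

Lemma lex_lub_of_column_sup (X : LexT mul bot -> Prop) (s : nat -> A) (Hs : in_Lex mul bot s) :
  column_sup le (seqs_of X) s -> is_lub (lex_le le (mul := mul) (bot := bot)) X (exist _ s Hs).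
Proof.
  intros Hsup; destruct (column_sup_is_lub le _ _ Hsup) as [Hub Hleast].
  split; unfold lex_le; simpl.
  - intros t Ht; apply Hub; exists t; auto.
  - intros t Ht; apply Hleast; intros x [u [Hu <-]]; apply Ht, Hu.
Qed.

Section Columns.
Context (X : LexT mul bot -> Prop)
  (Hcol : forall p n, exists v, is_lub le (column (seqs_of X) p n) v).

Lemma greedy_sup_in_Lex : in_Lex mul bot (greedy_sup le bot (seqs_of X)).
Proof.
  apply (column_sup_in_Lex le bot mul (seqs_of X)); auto.
  - intros x [t [_ <-]]; apply proj2_sig.
  - apply greedy_column_sup, Hcol.
Qed.

Lemma lex_lub_exists : exists s, is_lub (lex_le le (mul := mul) (bot := bot)) X s.
Proof.
  exists (exist _ _ greedy_sup_in_Lex).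
  apply lex_lub_of_column_sup, greedy_column_sup, Hcol.
Qed.

Lemma lex_lub_column_sup (s : LexT mul bot) :
  is_lub (lex_le le (mul := mul) (bot := bot)) X s -> column_sup le (seqs_of X) (proj1_sig s).
Proof.
  intros Hs.
  assert (Hgreedy := lex_lub_of_column_sup X _ greedy_sup_in_Lex (greedy_column_sup le bot _ Hcol)).
  rewrite (is_lub_unique _ X s _ (lex_le_partial_order le Hpo) Hs Hgreedy).
  apply greedy_column_sup, Hcol.
Qed.

Lemma lex_lub_mul (Hcm : comm_monoid mul one) (Habs : forall z, mul z bot = bot)
  (Hmono : forall c x y, le x y -> le (mul c x) (mul c y))
  (Hc : lex_mul_closed mul bot) (a s : LexT mul bot) :
  (forall n p v, is_lub le (column (seqs_of X) p n) v ->
     is_lub le (fun z => exists y, column (seqs_of X) p n y /\ z = mul (proj1_sig a n) y)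
               (mul (proj1_sig a n) v)) ->
  is_lub (lex_le le (mul := mul) (bot := bot)) X s ->
  is_lub (lex_le le (mul := mul) (bot := bot))
         (fun y => exists x, X x /\ y = lex_mul Hc a x) (lex_mul Hc a s).
Proof.
  intros Hdistr Hs.
  pose proof (lex_lub_column_sup s Hs) as Hsup.
  destruct (column_sup_mul Hpo Hcm Habs Hmono _ _ _ (proj2_sig a) Hsup
              (fun n => Hdistr n _ _ (Hsup n))) as [Hub Hleast].
  split; unfold lex_le.
  - intros y [x [Hx ->]]; apply Hub; exists (proj1_sig x); split; [exists x; auto | reflexivity].
  - intros b Hb; apply Hleast; intros z [x [[t [Ht <-]] ->]].
    apply (Hb (lex_mul Hc a t)); exists t; auto.
Qed.

End Columns.
End LexLub.

Section Distributivity.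
Context {A : Type} {le : A -> A -> Prop} {mul : A -> A -> A} (Hpo : partial_order le).

Lemma fin_distributive_mul_bot (bot : A) :
  is_lub le (fun _ => False) bot -> fin_distributive le mul -> forall z, mul z bot = bot.
Proof.
  intros Hbot Hfd z; destruct (Hfd z [] bot Hbot) as [_ Hleast].
  apply Hpo; [apply Hleast; intros y [x [[] _]] | apply Hbot; intros y []].
Qed.

Lemma fin_distributive_monotone :
  fin_distributive le mul -> forall c x y, le x y -> le (mul c x) (mul c y).
Proof.
  intros Hfd c x y Hxy.
  assert (Hxy_lub : is_lub le (fun w => In w [x; y]) y).
  { split; [intros w [<- | [<- | []]]; [exact Hxy | apply Hpo] | intros z Hz; apply Hz; simpl; auto]. }
  apply (proj1 (Hfd c [x; y] y Hxy_lub)); exists x; simpl; auto.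
Qed.

End Distributivity.

Lemma distributive_fin {A : Type} {le : A -> A -> Prop} {mul : A -> A -> A} :
  distributive le mul -> fin_distributive le mul.
Proof. intros Hd a l; apply Hd. Qed.

Definition finite_set {T : Type} (Y : T -> Prop) : Prop :=
  exists l, forall y, Y y <-> In y l.

Lemma finite_set_incl {T : Type} (l : list T) :
  forall Y : T -> Prop, (forall y, Y y -> In y l) -> finite_set Y.
Proof.
  induction l as [|a l IH]; intros Y HY.
  - exists []; intros y; split; [apply HY | intros []].
  - destruct (IH (fun y => Y y /\ y <> a)) as [l' Hl'].
    { intros y [Hy Hne]; destruct (HY y Hy); [congruence | assumption]. }
    destruct (classic (Y a)) as [Ya | nYa].
    + exists (a :: l'); intros y; simpl; rewrite <- Hl'.
      destruct (classic (y = a)) as [-> | Hne]; [tauto|].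
      split; [intros Hy; right; tauto | intros [-> | [Hy _]]; [exact Ya | exact Hy]].
    + exists l'; intros y; rewrite <- Hl'; split; [|tauto].
      intros Hy; split; [exact Hy | intros ->; contradiction].
Qed.

Lemma column_finite {A : Type} {mul : A -> A -> A} {bot : A} (l : list (LexT mul bot))
  (p : nat -> A) (n : nat) : finite_set (column (seqs_of (fun t => In t l)) p n).
Proof.
  apply finite_set_incl with (map (fun t => proj1_sig t n) l).
  intros y [x [[t [Ht <-]] [_ ->]]]; apply (in_map (fun t => proj1_sig t n)), Ht.
Qed.

Section FiniteSets.
Context {A : Type} {le : A -> A -> Prop} {mul : A -> A -> A} (Y : A -> Prop) (HY : finite_set Y).

Lemma SLM_finite_lub (one : A) : SLM le mul one -> exists v, is_lub le Y v.
Proof.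
  intros [_ [_ Hlub]]; destruct HY as [l Hl]; destruct (Hlub l) as [v Hv].
  exists v; apply is_lub_ext with (fun y => In y l); [firstorder | exact Hv].
Qed.

Lemma fin_distributive_finite (c v : A) :
  fin_distributive le mul -> is_lub le Y v ->
  is_lub le (fun z => exists y, Y y /\ z = mul c y) (mul c v).
Proof.
  intros Hfd Hv; destruct HY as [l Hl].
  apply is_lub_ext with (fun z => exists y, In y l /\ z = mul c y); [firstorder|].
  apply Hfd, is_lub_ext with Y; [firstorder | exact Hv].
Qed.

End FiniteSets.

Theorem proposition6 (A : Type) (le : A -> A -> Prop) (mul : A -> A -> A) (one bot : A)
  (Hbot : is_lub le (fun _ => False) bot) :
  (forall (HS : SLM le mul one), fin_distributive le mul ->
     exists Hc : lex_mul_closed mul bot,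
       SLM (lex_le le (bot := bot) (mul := mul)) (lex_mul Hc) (lex_one bot (proj1 (proj2 HS))) /\
       fin_distributive (lex_le le (bot := bot) (mul := mul)) (lex_mul Hc)) /\
  (forall (HC : CLM le mul one), distributive le mul ->
     exists Hc : lex_mul_closed mul bot,
       CLM (lex_le le (bot := bot) (mul := mul)) (lex_mul Hc) (lex_one bot (proj1 (proj2 HC))) /\
       distributive (lex_le le (bot := bot) (mul := mul)) (lex_mul Hc)).
Proof.
  assert (Hbot_le : forall a, le bot a) by (intros a; apply Hbot; intros y []).
  split.
  - intros HS Hfd; pose proof HS as [Hpo [Hcm _]].
    pose proof (fin_distributive_mul_bot Hpo bot Hbot Hfd) as Habs.
    pose proof (fin_distributive_monotone Hpo Hfd) as Hmono.
    assert (Hcol : forall (l : list (LexT mul bot)) p n,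
               exists v, is_lub le (column (seqs_of (fun t => In t l)) p n) v)
      by (intros l p n; exact (SLM_finite_lub _ (column_finite l p n) one HS)).
    exists (lex_mul_closed_absorbing Hcm Habs).
    split; [split; [|split]|].
    + apply lex_le_partial_order, Hpo.
    + apply lex_comm_monoid.
    + intros l; exact (lex_lub_exists Hpo Hbot_le _ (Hcol l)).
    + intros a l s; apply (lex_lub_mul Hpo Hbot_le _ (Hcol l) Hcm Habs Hmono).
      intros n p v; apply fin_distributive_finite; [apply column_finite | exact Hfd].
  - intros HC Hd; pose proof HC as [Hpo [Hcm Hlub]].
    pose proof (fin_distributive_mul_bot Hpo bot Hbot (distributive_fin Hd)) as Habs.
    pose proof (fin_distributive_monotone Hpo (distributive_fin Hd)) as Hmono.
    exists (lex_mul_closed_absorbing Hcm Habs).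
    split; [split; [|split]|].
    + apply lex_le_partial_order, Hpo.
    + apply lex_comm_monoid.
    + intros X; exact (lex_lub_exists Hpo Hbot_le X (fun p n => Hlub _)).
    + intros a X s; apply (lex_lub_mul Hpo Hbot_le X (fun p n => Hlub _) Hcm Habs Hmono).
      intros n p v; apply Hd.
Qed.
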